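(* Let $P$ be the uniform probability measure on $[0,1]$ and $Q$ a probability measure on $[0,1]$ with density $q$, so $r = dQ/dP = q$. Assume $r$ is unimodal with maximiser $x^*$ and $r_{max} = r(x^* ) = \sup r < \infty$. Then the width function $w$ is non-increasing in $\gamma$ and satisfies $$\int_0^1 w(\gamma)\,d\gamma = \frac{1}{r_{max}} \quad\text{and}\quad w(0) \ge \frac{1}{r_{max}}.$$
   Context: Unimodal: $r$ non-decreasing on $[0,x^*]$ and non-increasing on $[x^*,1]$. For $\gamma\in[0,1]$, the superlevel set is $S(\gamma) = \{x\in[0,1] : r(x) \ge \gamma r_{max}\}$ and the width function is $w(\gamma) = \inf\{\delta\in[0,1] : \exists z\in[0,1],\ S(\gamma)\subseteq[z,z+\delta]\}$. *)

From HB Require Import structures.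
From mathcomp Require Import all_boot all_order all_algebra.
From mathcomp Require Import all_classical all_reals all_analysis.
Set Implicit Arguments. Unset Strict Implicit. Unset Printing Implicit Defensive.
Import Order.TTheory GRing.Theory Num.Theory.
Local Open Scope classical_set_scope.
Local Open Scope ring_scope.

Definition superlevel (R : realType) (r : R -> R) (rmax gamma : R) : set R :=
  [set x | 0 <= x <= 1 /\ gamma * rmax <= r x].

Definition width (R : realType) (r : R -> R) (rmax gamma : R) : R :=
  inf [set delta : R | 0 <= delta <= 1 /\
        exists z : R, 0 <= z <= 1 /\ superlevel r rmax gamma `<=` `[z, z + delta]].

From HB Require Import structures.
From mathcomp Require Import all_boot all_order all_algebra.
From mathcomp Require Import all_classical all_reals all_analysis.
From mathcomp Require Import lra measurable_realfun.

(* Unimodality makes each superlevel set S(g), g <= 1, an interval containing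
   x*, so the narrowest covering interval is its hull and
   w(g) = sup S(g) - inf S(g) = lambda(S(g)); w is non-increasing because S(g)
   shrinks as g grows.  The region {(x, g) in [0,1]^2 : g r_max <= r x} has
   x-sections [0, r x / r_max] and g-sections S(g), so Tonelli gives the
   layer-cake identity  int w = int r / r_max = 1 / r_max.  Finally
   S(0) = [0,1] gives w(0) = 1, while 1 = int r <= r_max. *)

Set Implicit Arguments.
Unset Strict Implicit.
Unset Printing Implicit Defensive.

Import Order.TTheory GRing.Theory Num.Theory.
Local Open Scope classical_set_scope.
Local Open Scope ring_scope.

Section covering_lengths.
Variable R : realType.
Implicit Types S T : set R.

Definition covering_lengths S : set R :=
  [set delta | 0 <= delta <= 1 /\
    exists z, 0 <= z <= 1 /\ S `<=` `[z, z + delta]].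

Lemma widthE (r : R -> R) (rmax gamma : R) :
  width r rmax gamma = inf (covering_lengths (superlevel r rmax gamma)).
Proof. by []. Qed.

Lemma covering_lengths1 S : S `<=` `[0, 1] -> covering_lengths S 1.
Proof.
move=> S01; split; first by rewrite ler01 lexx.
by exists 0; split; [rewrite lexx ler01 | rewrite add0r].
Qed.

Lemma inf_covering_lengths S : S `<=` `[0, 1] -> S !=set0 ->
  inf (covering_lengths S) = sup S - inf S.
Proof.
move=> S01 [s Ss].
have lbS := subset_has_lbound S01 (has_lbound_itv _ _ _).
have ubS := subset_has_ubound S01 (has_ubound_itv _ _ _).
have infS := ge_inf lbS; have supS := ub_le_sup ubS.
have S01x x : S x -> 0 <= x <= 1 by move/S01; rewrite /= in_itv.
have inf_ge0 : 0 <= inf S.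
  by apply: lb_le_inf; [exists s | move=> x /S01x /andP[]].
have sup_le1 : sup S <= 1.
  by apply: ge_sup; [exists s | move=> x /S01x /andP[]].
have inf_le_s := infS _ Ss; have s_le_sup := supS _ Ss.
apply/eqP; rewrite eq_le; apply/andP; split.
- apply: ge_inf; first by exists 0 => d [/andP[]].
  split; first by apply/andP; split; lra.
  exists (inf S); split; first by apply/andP; split; lra.
  by move=> x Sx; rewrite /= in_itv /= infS //= addrC subrK supS.
- apply: lb_le_inf; first by exists 1; exact: covering_lengths1.
  move=> d [_ [z [_ Sz]]].
  have z_le_inf : z <= inf S.
    apply: lb_le_inf; first by exists s.
    by move=> x /Sz; rewrite /= in_itv => /andP[].
  have sup_le : sup S <= z + d.
    apply: ge_sup; first by exists s.
    by move=> x /Sz; rewrite /= in_itv => /andP[].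
  lra.
Qed.

Lemma le_inf_covering_lengths_diff S a b : S `<=` `[0, 1] -> S a -> S b ->
  b - a <= inf (covering_lengths S).
Proof.
move=> S01 Sa Sb; apply: lb_le_inf; first by exists 1; exact: covering_lengths1.
move=> d [_ [z [_ Sz]]].
move: (Sz _ Sa) (Sz _ Sb); rewrite /= !in_itv /= => /andP[za _] /andP[_ bzd].
lra.
Qed.

Lemma le_inf_covering_lengths S T : T `<=` `[0, 1] -> S `<=` T ->
  inf (covering_lengths S) <= inf (covering_lengths T).
Proof.
move=> T01 ST; apply: lb_le_inf; first by exists 1; exact: covering_lengths1.
move=> d [d01 [z [z01 Tz]]]; apply: ge_inf; first by exists 0 => e [/andP[]].
by split=> //; exists z; split=> //; exact: subset_trans Tz.
Qed.

End covering_lengths.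

Section interval_measure.
Variable R : realType.
Implicit Types S : set R.

Lemma lebesgue_measure_itv_bnd (b1 b2 : bool) (a b : R) : a <= b ->
  lebesgue_measure [set` Interval (BSide b1 a) (BSide b2 b)] = (b - a)%:E.
Proof.
move=> ab; rewrite lebesgue_measure_itv /= lte_fin -EFinD.
by case: ltgtP ab => // ->; rewrite subrr.
Qed.

Lemma lebesgue_measure_is_interval S :
  is_interval S -> has_lbound S -> has_ubound S ->
  lebesgue_measure S = (sup S - inf S)%:E.
Proof.
move=> iS lS uS.
have [->|/set0P[s Ss]] := eqVneq S set0.
  by rewrite measure0 sup0 inf0 subrr.
have le_inf_sup : inf S <= sup S := le_trans (ge_inf lS Ss) (ub_le_sup uS Ss).
have mS : measurable S := is_interval_measurable iS.
apply/eqP; rewrite eq_le; apply/andP; split.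
- rewrite -(lebesgue_measure_itv_bnd true false le_inf_sup).
  apply: le_measure; rewrite ?inE //.
  by move=> x Sx; rewrite /= in_itv /= ge_inf ?ub_le_sup.
- rewrite -(lebesgue_measure_itv_bnd false true le_inf_sup).
  apply: le_measure; rewrite ?inE //.
  rewrite set_itvoo -interval_bounded_interior //.
  exact: (@interior_subset R^o).
Qed.

End interval_measure.

Lemma integral_measure_xsection_ysection d1 d2
    (T1 : measurableType d1) (T2 : measurableType d2) (R : realType)
    (m1 : {sigma_finite_measure set T1 -> \bar R})
    (m2 : {sigma_finite_measure set T2 -> \bar R}) (A : set (T1 * T2)) :
  measurable A ->
  (\int[m1]_x m2 (xsection A x) = \int[m2]_y m1 (ysection A y))%E.
Proof.
move=> mA; have := indic_fubini_tonelli m1 m2 mA.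
by rewrite indic_fubini_tonelli_FE // indic_fubini_tonelli_GE.
Qed.

Section unimodal_width.
Variables (R : realType) (r : R -> R) (xstar : R).
Hypothesis r_ge0 : forall x, 0 <= x <= 1 -> 0 <= r x.
Hypothesis xstar01 : 0 <= xstar <= 1.
Hypothesis r_incr : forall x y, 0 <= x -> x <= y -> y <= xstar -> r x <= r y.
Hypothesis r_decr : forall x y, xstar <= x -> x <= y -> y <= 1 -> r y <= r x.

Local Notation rmax := (r xstar).

Lemma unimodal_le_max x : 0 <= x <= 1 -> r x <= rmax.
Proof.
move=> /andP[x0 x1]; have [xs x1s] := andP xstar01.
by case: (leP x xstar) => [|/ltW] xxs; [exact: r_incr | exact: r_decr].
Qed.

Lemma superlevel_sub01 g : superlevel r rmax g `<=` `[0, 1].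
Proof. by move=> x [x01 _]; rewrite /= in_itv. Qed.

Lemma superlevel_is_interval g : is_interval (superlevel r rmax g).
Proof.
move=> a b [/andP[a0 a1] ra] [/andP[b0 b1] rb] c /andP[ac cb].
split; first by apply/andP; split; lra.
case: (leP c xstar) => [cxs|/ltW xsc].
- by apply: le_trans ra _; apply: r_incr.
- by apply: le_trans rb _; apply: r_decr.
Qed.

Lemma superlevel_max g : g <= 1 -> superlevel r rmax g xstar.
Proof. by move=> g1; split=> //; rewrite ler_piMl // r_ge0. Qed.

Lemma superlevel_antitone g1 g2 :
  g1 <= g2 -> superlevel r rmax g2 `<=` superlevel r rmax g1.
Proof.
move=> g12 x [x01 rx]; split=> //; apply: le_trans rx.
by rewrite ler_wpM2r // r_ge0.
Qed.

Lemma width_antitone g1 g2 : g1 <= g2 -> width r rmax g2 <= width r rmax g1.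
Proof.
move=> g12; rewrite !widthE; apply: le_inf_covering_lengths.
  exact: superlevel_sub01.
exact: superlevel_antitone.
Qed.

Lemma width_superlevel g : g <= 1 ->
  (width r rmax g)%:E = lebesgue_measure (superlevel r rmax g).
Proof.
move=> g1; have S01 := @superlevel_sub01 g.
rewrite widthE inf_covering_lengths //; last first.
  by exists xstar; exact: superlevel_max.
rewrite lebesgue_measure_is_interval //; first exact: superlevel_is_interval.
  exact: subset_has_lbound S01 (has_lbound_itv _ _ _).
exact: subset_has_ubound S01 (has_ubound_itv _ _ _).
Qed.

Lemma one_le_width0 : 1 <= width r rmax 0.
Proof.
have S0 x : 0 <= x <= 1 -> superlevel r rmax 0 x.
  by move=> x01; split; rewrite // mul0r r_ge0.
rewrite -[1]subr0 widthE; apply: le_inf_covering_lengths_diff.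
  exact: superlevel_sub01.
all: by apply: S0; rewrite lexx ler01.
Qed.

Hypothesis r_meas : measurable_fun (`[0, 1] : set R) r.
Hypothesis r_int1 :
  (\int[lebesgue_measure]_(x in (`[0%R, 1%R] : set R)) (r x)%:E = 1)%E.

Lemma one_le_max : 1 <= rmax.
Proof.
rewrite -lee_fin -r_int1.
have -> : rmax%:E =
    (\int[lebesgue_measure]_(x in (`[0%R, 1%R] : set R)) rmax%:E)%E.
  rewrite integral_cst // [X in (_ * X)%E](_ : _ = 1%E) ?mule1 //.
  by have := lebesgue_measure_itv_bnd true false (@ler01 R); rewrite subr0.
apply: ge0_le_integral => //; first exact/measurable_EFinP.
by move=> x; rewrite /= in_itv lee_fin => /unimodal_le_max.
Qed.

Let hypograph : set (R * R) :=
  [set z | 0 <= z.2 <= 1 /\ superlevel r rmax z.2 z.1].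

Let measurable_hypograph : measurable hypograph.
Proof.
pose D := `[0, 1] `*` `[0, 1] : set (R * R).
have -> : hypograph = D `&` (fun z => z.2 * rmax <= r z.1) @^-1` [set true].
  apply/seteqP; split=> -[x y]; rewrite /hypograph /D /= !in_itv /=.
    by move=> [y01 [x01 ->]].
  by move=> [[x01 y01] rxy].
have mD : measurable D by apply: measurableX; exact: measurable_itv.
apply: measurable_fun_ler => //.
  apply: measurable_funTS; apply: measurable_funM => //; exact: measurable_snd.
apply: (measurable_comp (measurable_itv _) _ r_meas).
  by move=> _ [z [z1 _] <-].
exact: measurable_funTS measurable_fst.
Qed.

Let measure_xsection_hypograph x :
  lebesgue_measure (xsection hypograph x) =
  if 0 <= x <= 1 then ((rmax^-1)%:E * (r x)%:E)%E else 0%E.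
Proof.
case: ifPn => x01; last first.
  suff -> : xsection hypograph x = set0 by rewrite measure0.
  apply/seteqP; split=> y //; rewrite /xsection /= inE => -[_ []].
  by move: x01 => /negP.
have rmax_gt0 : 0 < rmax := lt_le_trans ltr01 one_le_max.
have rx_ge0 : 0 <= rmax^-1 * r x by rewrite mulr_ge0 ?invr_ge0 ?r_ge0 // ltW.
have -> : xsection hypograph x = `[0, rmax^-1 * r x]%classic.
  apply/seteqP; split=> y; rewrite /xsection /= inE /= in_itv /=.
    by move=> [/andP[y0 _] [_ ry]]; rewrite y0 mulrC ler_pdivlMr.
  move=> /andP[y0]; rewrite mulrC ler_pdivlMr // => ry; do !split => //.
  apply/andP; split => //; rewrite -(ler_pM2r rmax_gt0) mul1r.
  exact: le_trans ry (unimodal_le_max x01).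
by rewrite lebesgue_measure_itv_bnd // subr0 EFinM.
Qed.

Let ysection_hypograph y :
  ysection hypograph y = if 0 <= y <= 1 then superlevel r rmax y else set0.
Proof.
case: ifPn => y01; apply/seteqP; split=> x;
  rewrite /ysection /hypograph /= inE //.
- by case.
- by case; rewrite (negbTE y01).
Qed.

Let integral_xsection_hypograph :
  (\int[lebesgue_measure]_x lebesgue_measure (xsection hypograph x) =
   (rmax^-1)%:E)%E.
Proof.
rewrite -[RHS]mule1 -r_int1 -ge0_integralZl_EFin //; first last.
- by rewrite invr_ge0 (le_trans ler01 one_le_max).
- exact/measurable_EFinP.
rewrite [RHS]integral_mkcond; apply: eq_integral => x _.
by rewrite patchE measure_xsection_hypograph mem_setE in_itv.
Qed.

Lemma integral_width :
  (\int[lebesgue_measure]_(g in (`[0%R, 1%R] : set R)) (width r rmax g)%:E =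
   (rmax^-1)%:E)%E.
Proof.
rewrite -integral_xsection_hypograph integral_measure_xsection_ysection //.
rewrite integral_mkcond; apply: eq_integral => y _.
rewrite patchE ysection_hypograph mem_setE in_itv /=.
by case: ifPn => [/andP[_ y1]|_]; [exact: width_superlevel | rewrite measure0].
Qed.

End unimodal_width.

Theorem mainTheorem3 (R : realType) (r : R -> R) (xstar : R)
  (r_meas : measurable_fun (`[0%R, 1%R] : set R) r)
  (r_ge0 : forall x, 0 <= x <= 1 -> 0 <= r x)
  (r_int1 : (\int[lebesgue_measure]_(x in (`[0%R, 1%R] : set R)) (r x)%:E = 1)%E)
  (xstar01 : 0 <= xstar <= 1)
  (r_incr : forall x y, 0 <= x -> x <= y -> y <= xstar -> r x <= r y)
  (r_decr : forall x y, xstar <= x -> x <= y -> y <= 1 -> r y <= r x) :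
  let rmax := r xstar in
  (forall g1 g2, 0 <= g1 -> g1 <= g2 -> g2 <= 1 ->
      width r rmax g2 <= width r rmax g1) /\
  (\int[lebesgue_measure]_(g in (`[0%R, 1%R] : set R)) (width r rmax g)%:E = (rmax^-1)%:E)%E /\
  rmax^-1 <= width r rmax 0.
Proof.
move=> rmax; split; [|split].
- by move=> g1 g2 _ g12 _; exact: width_antitone.
- exact: integral_width.
- have rmax_ge1 : 1 <= rmax by exact: one_le_max.
  have width0_ge1 : 1 <= width r rmax 0 by exact: one_le_width0.
  by apply: le_trans width0_ge1; rewrite invf_le1 // (lt_le_trans ltr01).
Qed.
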